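(* Let $\mathbb{F}_q$ be a finite field, $\mathbb{P}$ a poset on $[n]=\{1,\dots,n\}$, and let $\mathcal{C}\subseteq\mathbb{F}_q^n$ be a linear MDS $\mathbb{P}$-code with parameters $[n,k,d=n-k+1]$, i.e. a linear $[n,k]$ code with $d=d_1^{\mathbb{P}}(\mathcal{C})=n-k+1$. Then, for every $r$ with $d\le r\le n$, $$\mathcal{A}_{r,\mathbb{P}}(\mathcal{C})=\sum_{I\in\Lambda^r(\mathbb{P})}\ \sum_{s=0}^{r-d}(-1)^s\binom{|M(I)|}{s}\left(q^{r-d+1-s}-1\right).$$
   Context: A subset $I\subseteq[n]$ is an ideal of $\mathbb{P}$ if $j\in I$ and $i\le_{\mathbb{P}}j$ imply $i\in I$. $\Lambda^r(\mathbb{P})$ is the set of ideals of $\mathbb{P}$ of size $r$, and $M(I)$ is the set of maximal elements (with respect to $\le_{\mathbb{P}}$) of $I$. For $u\in\mathbb{F}_q^n$, $\mathrm{supp}(u)=\{i:u_i\ne0\}$ and the $\mathbb{P}$-weight is $w_{\mathbb{P}}(u)=|\{i:i\le_{\mathbb{P}}j\text{ for some }j\in\mathrm{supp}(u)\}|$; for a subspace $D$, $w_{\mathbb{P}}(D)$ is the size of the smallest ideal containing $\bigcup_{u\in D}\mathrm{supp}(u)$. $d_1^{\mathbb{P}}(\mathcal{C})=\min\{w_{\mathbb{P}}(D): D \text{ a 1-dimensional subspace of }\mathcal{C}\}$ (the minimum $\mathbb{P}$-weight of a nonzero codeword). $\mathcal{A}_{r,\mathbb{P}}(\mathcal{C})=|\{u\in\mathcal{C}:w_{\mathbb{P}}(u)=r\}|$.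 *)

From HB Require Import structures.
From mathcomp Require Import all_boot all_order all_algebra.
Set Implicit Arguments. Unset Strict Implicit. Unset Printing Implicit Defensive.
Import GRing.Theory.

(* The poset P on [n] is modelled on 'I_n (coordinates 0..n-1) by a relation le. *)
Definition is_poset (n : nat) (le : rel 'I_n) : Prop :=
  [/\ forall i, le i i,
      forall i j, le i j -> le j i -> i = j
    & forall i j k, le i j -> le j k -> le i k].

Definition is_ideal (n : nat) (le : rel 'I_n) (I : {set 'I_n}) : bool :=
  [forall j, forall i, (j \in I) && le i j ==> (i \in I)].

Definition ideals_of_size (n : nat) (le : rel 'I_n) (r : nat) : {set {set 'I_n}} :=
  [set I : {set 'I_n} | is_ideal le I & #|I| == r].

Definition maxl (n : nat) (le : rel 'I_n) (I : {set 'I_n}) : {set 'I_n} :=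
  [set j in I | [forall i in I, le j i ==> (i == j)]].

Section Weights.
Variables (F : finFieldType) (n : nat) (le : rel 'I_n).

Definition supp (u : 'rV[F]_n) : {set 'I_n} := [set i | (u ord0 i != 0%R)].

Definition wP (u : 'rV[F]_n) : nat :=
  #|[set i : 'I_n | [exists j, (j \in supp u) && le i j]]|.

(* d_1^P(C): minimum P-weight of a nonzero codeword (n.+1 if C = 0) *)
Definition d1P (C : {vspace 'rV[F]_n}) : nat :=
  \big[minn/n.+1]_(u : 'rV[F]_n | (u \in C) && (u != 0%R)) wP u.

Definition APr (C : {vspace 'rV[F]_n}) (r : nat) : nat :=
  #|[set u : 'rV[F]_n | (u \in C) && (wP u == r)]|.
End Weights.

From mathcomp Require Import all_boot all_order all_algebra all_field zify.
Import Order.TTheory GRing.Theory.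
Set Implicit Arguments. Unset Strict Implicit.

(** The P-weight of [u] is the size of the ideal generated by its support, and
  that ideal is [I] exactly when [supp u] lies in [I] and contains every maximal
  element of [I].  So [A_r] is a sum over the ideals [I] of size [r] of the number
  of codewords supported in [I] and nonzero on all of [M(I)], which inclusion-exclusion
  over the subsets [S] of [M(I)] computes from the sizes of the subcodes
  [C(J) = {u in C | supp u <= J}] for the ideals [J = I \ S].
  The MDS hypothesis makes these sizes explicit: [C(J) = 0] when [|J| < d], and
  for an ideal [J'] of size [d - 1] the map erasing the coordinates in [J'] is
  injective on [C], hence (as [|C| = q^(n-d+1)]) a bijection onto the vectors
  vanishing on [J']; it follows that [|C(J)| = q^(|J|-d+1)] for every ideal
  [J] of size at least [d - 1].  Finally [sum_s (-1)^s binom(m, s) = 0]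
  turns the resulting alternating sum into the stated one. *)

Section Poset.
Variables (n : nat) (le : rel 'I_n).
Hypothesis le_poset : is_poset le.

Let le_refl i : le i i. Proof. by case: le_poset. Qed.
Let le_anti i j : le i j -> le j i -> i = j. Proof. by case: le_poset => _ + _; apply. Qed.
Let le_trans i j k : le i j -> le j k -> le i k. Proof. by case: le_poset => _ _; apply. Qed.

Definition ideal_gen (S : {set 'I_n}) := [set i | [exists j, (j \in S) && le i j]].

Lemma wPE (F : finFieldType) (u : 'rV[F]_n) : wP le u = #|ideal_gen (supp u)|.
Proof. by []. Qed.

Lemma idealP (I : {set 'I_n}) :
  reflect (forall i j, j \in I -> le i j -> i \in I) (is_ideal le I).
Proof.
apply: (iffP forallP) => [H i j jI lij | H j].
  by move/forallP: (H j) => /(_ i); rewrite jI lij.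
by apply/forallP => i; apply/implyP => /andP[]; apply: H.
Qed.

Lemma ideal_gen_ideal (S : {set 'I_n}) : is_ideal le (ideal_gen S).
Proof.
apply/idealP => i j; rewrite !inE => /existsP[k /andP[kS ljk]] lij.
by apply/existsP; exists k; rewrite kS (le_trans lij ljk).
Qed.

Lemma sub_ideal_gen (S : {set 'I_n}) : S \subset ideal_gen S.
Proof. by apply/subsetP => i iS; rewrite inE; apply/existsP; exists i; rewrite iS le_refl. Qed.

Lemma ideal_gen_min (S I : {set 'I_n}) : is_ideal le I -> S \subset I -> ideal_gen S \subset I.
Proof.
move=> /idealP idI /subsetP sSI; apply/subsetP => i.
by rewrite inE => /existsP[j /andP[jS lij]]; apply: idI (sSI _ jS) lij.
Qed.

Lemma maxlP (I : {set 'I_n}) j :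
  reflect (j \in I /\ forall i, i \in I -> le j i -> i = j) (j \in maxl le I).
Proof.
rewrite inE; apply: (iffP andP) => [[jI /forallP H] | [jI H]]; split => //.
  by move=> i iI lji; move/(_ i): H; rewrite iI lji => /eqP.
by apply/forallP => i; apply/implyP => iI; apply/implyP => lji; rewrite (H i iI lji).
Qed.

Lemma maxl_sub (I : {set 'I_n}) : maxl le I \subset I.
Proof. by apply/subsetP => j /maxlP[]. Qed.

(* Maximize [x] by minimizing the number of elements of [I] above it. *)
Lemma maxl_above (I : {set 'I_n}) x : x \in I -> exists2 m, m \in maxl le I & le x m.
Proof.
move=> xI; pose up j := [set i in I | le j i].
have cand_x : [pred j | (j \in I) && le x j] x by rewrite /= xI le_refl.
case: (arg_minnP (fun j => #|up j|) cand_x) => j /andP[jI lxj] up_min.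
exists j => //; apply/maxlP; split => // i iI lji; apply/eqP/negP => /negP nij.
have /up_min : (i \in I) && le x i by rewrite iI (le_trans lxj lji).
apply/negP; rewrite -ltnNge; apply: proper_card; apply/properP; split.
  by apply/subsetP => k; rewrite !inE => /andP[-> lik]; rewrite (le_trans lji lik).
exists j; first by rewrite inE jI le_refl.
by rewrite inE jI /=; apply: contra nij => lij; rewrite (le_anti lij lji).
Qed.

Lemma card_maxl_gt0 (I : {set 'I_n}) : 0 < #|I| -> 0 < #|maxl le I|.
Proof.
by case/card_gt0P => x /maxl_above[m mM _]; apply/card_gt0P; exists m.
Qed.

Lemma ideal_genE (S I : {set 'I_n}) : is_ideal le I ->
  (ideal_gen S == I) = (S \subset I) && (maxl le I \subset S).
Proof.
move=> idI; apply/eqP/andP => [<- | [sSI sMS]].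
  split; first exact: sub_ideal_gen.
  apply/subsetP => m /maxlP[]; rewrite inE => /existsP[j /andP[jS lmj]] m_max.
  by rewrite -(m_max j _ lmj) // (subsetP (sub_ideal_gen S)).
apply/eqP; rewrite eqEsubset ideal_gen_min //=.
apply/subsetP => i iI; have [m mM lim] := maxl_above iI.
by rewrite inE; apply/existsP; exists m; rewrite (subsetP sMS _ mM) lim.
Qed.

Lemma ideal_setD_maxl (I T : {set 'I_n}) :
  is_ideal le I -> T \subset maxl le I -> is_ideal le (I :\: T).
Proof.
move=> /idealP idI /subsetP sTM; apply/idealP => i j; rewrite !inE => /andP[jT jI] lij.
rewrite (idI _ _ jI lij) andbT; apply: contra jT => iT.
by have /maxlP[_ i_max] := sTM _ iT; rewrite (i_max j jI lij).
Qed.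

Lemma subideal_of_size (J : {set 'I_n}) m : is_ideal le J -> m <= #|J| ->
  exists2 J', is_ideal le J' /\ J' \subset J & #|J'| = m.
Proof.
move eqk : (#|J| - m) => k; elim: k J eqk => [|k IH] J eqk idJ lemJ.
  by exists J => //; apply/eqP; rewrite eqn_leq lemJ -subn_eq0 eqk.
have /card_gt0P[x xJ] : 0 < #|J| by lia.
have [y yM _] := maxl_above xJ.
have idJy : is_ideal le (J :\ y) by apply: ideal_setD_maxl => //; rewrite sub1set.
have cardJy : #|J :\ y| = #|J|.-1.
  by rewrite [in RHS](cardsD1 y J) (subsetP (maxl_sub J) _ yM).
have [|||J' [idJ' sJ'] cJ'] := IH (J :\ y); rewrite ?cardJy //; try lia.
by exists J' => //; split => //; apply: subset_trans sJ' (subsetDl _ _).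
Qed.

End Poset.

Section Vanishing.
Variables (F : finFieldType) (n : nat).
Local Open Scope ring_scope.

Definition vanish_on (A : {set 'I_n}) :=
  [set v : 'rV[F]_n | [forall i in A, v ord0 i == 0]].

Lemma vanish_onP (A : {set 'I_n}) (v : 'rV[F]_n) :
  reflect {in A, forall i, v ord0 i = 0} (v \in vanish_on A).
Proof. by rewrite inE; apply: (iffP forall_inP) => H i /H /eqP. Qed.

Lemma vanish_onU (A B : {set 'I_n}) :
  vanish_on (A :|: B) = vanish_on A :&: vanish_on B.
Proof.
apply/setP => v; rewrite [in RHS]inE.
apply/vanish_onP/andP => [H | [/vanish_onP HA /vanish_onP HB] i].
  by split; apply/vanish_onP => i iAB; apply: H; rewrite inE iAB ?orbT.
by rewrite inE => /orP[/HA | /HB].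
Qed.

Lemma supp_subsetE (u : 'rV[F]_n) (J : {set 'I_n}) :
  (supp u \subset J) = (u \in vanish_on (~: J)).
Proof.
apply/subsetP/vanish_onP => [H i | H i]; rewrite inE.
  by move=> iJ; apply/eqP; apply: contraNT iJ => ui; apply: H; rewrite inE.
by move=> ui; apply: contraR ui => iJ; rewrite H // inE.
Qed.

Lemma card_vanish_on (A : {set 'I_n}) : #|vanish_on A| = (#|F| ^ (n - #|A|))%N.
Proof.
pose g (v : 'rV[F]_n) := [ffun i => v ord0 i].
have g_inj : injective g.
  by move=> u v /ffunP uv; apply/rowP => i; have := uv i; rewrite !ffunE.
have -> : (n - #|A| = #|~: A|)%N by have := cardsC A; rewrite card_ord; lia.
rewrite -(card_pffun_on 0 (~: A) (predT : {pred F})) -(card_imset _ g_inj).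
apply: eq_card => f; apply/imsetP/pffun_onP => [[v /vanish_onP v0 ->] | [fA _]].
  split => //; apply/subsetP => i; rewrite !inE ffunE.
  by apply: contraNN => iA; rewrite v0.
exists (\row_i f i); last by apply/ffunP => i; rewrite !ffunE mxE.
apply/vanish_onP => i iA; rewrite mxE; apply: contraTeq iA => fi.
by rewrite -in_setC (subsetP fA).
Qed.

Definition puncture (A : {set 'I_n}) (u : 'rV[F]_n) : 'rV[F]_n :=
  \row_i (if i \in A then 0 else u ord0 i).

Lemma puncture_vanish (A : {set 'I_n}) (u : 'rV[F]_n) : puncture A u \in vanish_on A.
Proof. by apply/vanish_onP => i iA; rewrite mxE iA. Qed.

Lemma puncture_vanish_disjoint (A B : {set 'I_n}) (u : 'rV[F]_n) :
  [disjoint A & B] -> (puncture A u \in vanish_on B) = (u \in vanish_on B).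
Proof.
move=> dAB; apply/vanish_onP/vanish_onP => H i iB; have := H i iB; rewrite mxE;
  by rewrite (disjointFl dAB iB).
Qed.

Lemma eq_puncture_supp (A : {set 'I_n}) (u v : 'rV[F]_n) :
  puncture A u = puncture A v -> supp (u - v) \subset A.
Proof.
move=> uv; rewrite supp_subsetE; apply/vanish_onP => i; rewrite inE => iA.
have := congr1 (fun w : 'rV[F]_n => w ord0 i) uv.
by rewrite !mxE (negbTE iA) => ->; rewrite subrr.
Qed.

End Vanishing.

Section Code.
Variables (F : finFieldType) (n : nat) (le : rel 'I_n) (C : {vspace 'rV[F]_n}).
Hypothesis le_poset : is_poset le.
Local Notation d := (d1P le C).
Local Notation q := #|F|.

Definition subcode (J : {set 'I_n}) := [set u in C | supp u \subset J].

Lemma APr_sum_ideals r :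
  APr le C r = (\sum_(I in ideals_of_size le r)
                  #|[set u in C | ideal_gen le (supp u) == I]|)%N.
Proof.
rewrite /APr -sum1_card (partition_big (fun u => ideal_gen le (supp u))
   (mem (ideals_of_size le r))) /=; last first.
  by move=> u; rewrite !inE ideal_gen_ideal //= => /andP[_].
apply: eq_bigr => I; rewrite inE => /andP[_ /eqP cardI].
rewrite -sum1_card; apply: eq_bigl => u; rewrite !inE wPE -andbA.
by case: (ideal_gen le (supp u) =P I) => [-> | _]; rewrite ?andbF ?cardI ?eqxx ?andbT.
Qed.

Lemma d1P_le_wP (u : 'rV[F]_n) : u \in C -> u != 0%R -> d <= wP le u.
Proof.
move=> uC u0; rewrite -leEnat; apply: (bigmin_le_cond (T := nat) n.+1).
by rewrite uC.
Qed.

Lemma code_supp_small (J : {set 'I_n}) (u : 'rV[F]_n) :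
  is_ideal le J -> #|J| < d -> u \in C -> supp u \subset J -> u = 0%R.
Proof.
move=> idJ small uC sJ; apply/eqP; apply: contraTT small => u0; rewrite -leqNgt.
by apply: leq_trans (d1P_le_wP uC u0) _; rewrite wPE subset_leq_card ?ideal_gen_min.
Qed.

Lemma subcode_small (J : {set 'I_n}) : is_ideal le J -> #|J| < d -> subcode J = [set 0%R].
Proof.
move=> idJ small; apply/setP => u; rewrite !inE; apply/andP/eqP => [[] | ->].
  exact: code_supp_small.
by rewrite mem0v supp_subsetE; split => //; apply/vanish_onP => i; rewrite mxE.
Qed.

Lemma puncture_code_inj (J : {set 'I_n}) :
  is_ideal le J -> #|J| < d -> {in C &, injective (puncture J)}.
Proof.
move=> idJ small u v uC vC /eq_puncture_supp/code_supp_small uv.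
by apply/eqP; rewrite -subr_eq0 uv ?rpredB.
Qed.

Hypothesis C_MDS : d = (n - \dim C + 1)%N.

Lemma puncture_codeE (J : {set 'I_n}) : is_ideal le J -> #|J| = d.-1 ->
  puncture J @: [set u in C] = vanish_on F J.
Proof.
move=> idJ cardJ.
have dimC : \dim C <= n by have := dimvS (subvf C); rewrite dimvf /dim /= mul1n.
have inj : {in [set u in C] &, injective (puncture J)}.
  by move=> u v; rewrite !inE; apply: puncture_code_inj => //; lia.
apply/eqP; rewrite eqEcard; apply/andP; split.
  by apply/subsetP => _ /imsetP[u _ ->]; apply: puncture_vanish.
rewrite card_vanish_on (card_in_imset inj) cardsE card_vspace.
by rewrite cardJ C_MDS (_ : n - _ = \dim C) //; lia.
Qed.

Lemma card_subcode (J : {set 'I_n}) :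
  is_ideal le J -> #|subcode J| = (q ^ (#|J| - d.-1))%N.
Proof.
move=> idJ; case: (ltnP #|J| d) => [small | large].
  by rewrite subcode_small // cards1 (_ : _ - _ = 0)%N ?expn0 //; lia.
have [|J' [idJ' sJ'J] cardJ'] := subideal_of_size le_poset idJ (m := d.-1); first lia.
have dJ' : [disjoint J' & ~: J] by rewrite -subsets_disjoint.
have inj : {in subcode J &, injective (puncture J')}.
  by move=> u v; rewrite !inE => /andP[uC _] /andP[vC _]; apply: puncture_code_inj; lia.
rewrite -(card_in_imset inj).
have -> : puncture J' @: subcode J = vanish_on F (J' :|: ~: J).
  apply/setP => v; rewrite vanish_onU inE -(puncture_codeE idJ' cardJ').
  apply/imsetP/andP => [[u] | [/imsetP[u uC ->]]].
    rewrite inE supp_subsetE => /andP[uC uJ] ->.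
    by split; [apply: imset_f; rewrite inE | rewrite puncture_vanish_disjoint].
  rewrite inE in uC; rewrite puncture_vanish_disjoint // => uJ.
  by exists u => //; rewrite inE uC supp_subsetE.
rewrite card_vanish_on cardsU (disjoint_setI0 dJ') cards0 cardJ'.
congr (_ ^ _); have := cardsC J; have := subset_leq_card sJ'J; rewrite card_ord; lia.
Qed.

Lemma subcode_setD (I S : {set 'I_n}) : subcode (I :\: S) = subcode I :&: vanish_on F S.
Proof.
by apply/setP => u; rewrite !inE !supp_subsetE setCD vanish_onU !inE andbA.
Qed.

End Code.

Section InclusionExclusion.
Local Open Scope ring_scope.

Lemma prod_nat_bool (R : comPzSemiRingType) (I : finType) (S : {pred I}) (c : I -> bool) :
  \prod_(t in S) ((c t)%:R : R) = [forall t in S, c t]%:R.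
Proof.
case: (boolP [forall t in S, c t]) => [/forall_inP H | /forall_inPn [t tS ct]].
  by apply: big1 => t /H ->.
by rewrite (bigD1 t) //= (negbTE ct) mul0r.
Qed.

Lemma prod_1D_powerset (R : comPzSemiRingType) (I : finType) (M : {set I}) (a : I -> R) :
  \prod_(t in M) (1 + a t) = \sum_(S in powerset M) \prod_(t in S) a t.
Proof.
rewrite big_mkcond /=.
transitivity (\prod_t ((if t \in M then a t else 0) + 1)).
  by apply: eq_bigr => t _; case: ifP => _; rewrite ?add0r // addrC.
rewrite bigA_distr (bigID (fun J : {set I} => J \subset M)) /=.
rewrite [X in _ + X]big1 ?addr0; last first.
  by move=> J /subsetPn [t tJ tM]; rewrite (bigD1 t) //= tJ (negbTE tM) mul0r.
apply: eq_big => [J | J sJM]; first by rewrite powersetE.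
rewrite [RHS]big_mkcond; apply: eq_bigr => t _.
by case: ifP => // tJ; rewrite (subsetP sJM _ tJ).
Qed.

Lemma natr_card_sep (R : pzSemiRingType) (T : finType) (A : {set T}) (Q : pred T) :
  #|[set x in A | Q x]|%:R = \sum_(x in A) (Q x)%:R :> R.
Proof.
rewrite -sum1_card natr_sum [LHS]big_mkcond [RHS]big_mkcond; apply: eq_bigr => x _.
by rewrite !inE; case: (x \in A); case: (Q x).
Qed.

Lemma inclusion_exclusion (R : comPzRingType) (T I : finType) (A : {set T})
    (M : {set I}) (b : I -> T -> bool) :
  #|[set x in A | [forall t in M, ~~ b t x]]|%:R =
  \sum_(S in powerset M) (-1) ^+ #|S| * #|[set x in A | [forall t in S, b t x]]|%:R
  :> R.
Proof.
have E x : [forall t in M, ~~ b t x]%:R =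
           \sum_(S in powerset M) \prod_(t in S) (- (b t x)%:R) :> R.
  rewrite -prod_nat_bool -prod_1D_powerset; apply: eq_bigr => t _.
  by case: (b t x); rewrite ?subrr ?oppr0 ?addr0.
rewrite natr_card_sep; under eq_bigr => x _ do rewrite E.
rewrite exchange_big /=; apply: eq_bigr => S _.
rewrite natr_card_sep mulr_sumr; apply: eq_bigr => x _.
by rewrite prodrN prod_nat_bool.
Qed.

Lemma sum_powerset_card (R : nmodType) (I : finType) (M : {set I}) (f : nat -> R) :
  \sum_(S in powerset M) f #|S| = \sum_(s < #|M|.+1) f s *+ 'C(#|M|, s).
Proof.
rewrite (partition_big (fun S : {set I} => (inord #|S| : 'I_(#|M|.+1))) xpredT) //=.
apply: eq_bigr => s _.
have inordS (S : {set I}) : S \subset M -> (inord #|S| == s :> 'I_(#|M|.+1)) = (#|S| == s).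
  move=> SM; have lt : (#|S| < #|M|.+1)%N by rewrite ltnS subset_leq_card.
  by rewrite -val_eqE /= inordK.
rewrite -cards_draws -sumr_const; apply: eq_big => [S | S].
  by rewrite powersetE inE; case: (boolP (S \subset M)) => // SM; rewrite inordS.
by rewrite powersetE => /andP[SM]; rewrite inordS // => /eqP ->.
Qed.

End InclusionExclusion.

Section AlternatingSum.
Local Open Scope ring_scope.

Lemma sum_ord_widen0 (R : nmodType) (h : nat -> R) a b : (a <= b)%N ->
  (forall s, (a <= s < b)%N -> h s = 0) -> \sum_(s < a) h s = \sum_(s < b) h s.
Proof.
move=> ab h0; rewrite -!(big_mkord xpredT) (big_cat_nat (n := a) (leq0n a) ab) /=.
by rewrite [X in _ + X]big1_seq ?addr0 // => s /andP[_]; rewrite mem_index_iota; apply: h0.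
Qed.

Lemma sum_alternating_binomial (R : pzRingType) m : (0 < m)%N ->
  \sum_(s < m.+1) (-1) ^+ s *+ 'C(m, s) = 0 :> R.
Proof.
move=> m0; transitivity ((1 - 1 : R) ^+ m); last by rewrite subrr expr0n eqn0Ngt m0.
by rewrite exprBn_comm; [apply: eq_bigr => s _; rewrite !expr1n !mulr1 | apply: commr1].
Qed.

(* Subtracting [1] from each power costs nothing since the signed binomials sum
   to [0]; the terms with [s > N] then vanish, and so do those with [s > m]. *)
Lemma sum_alternating_binomial_pow (m N q : nat) : (0 < m)%N -> (0 < q)%N ->
  \sum_(s < m.+1) (-1) ^+ s * (q ^ (N.+1 - s))%:Z *+ 'C(m, s) =
  \sum_(s < N.+1) (-1) ^+ s * ('C(m, s))%:Z * ((q ^ (N + 1 - s) - 1)%N)%:Z.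
Proof.
move=> m0 q0.
pose h s : int := (-1) ^+ s * ('C(m, s))%:Z * ((q ^ (N + 1 - s) - 1)%N)%:Z.
transitivity (\sum_(s < m.+1) h s).
  transitivity (\sum_(s < m.+1) (h s + (-1) ^+ s *+ 'C(m, s))); last first.
    by rewrite big_split /= sum_alternating_binomial // addr0.
  apply: eq_bigr => s _; rewrite /h -subzn ?expn_gt0 ?q0 // addn1.
  rewrite -mulr_natr -[(-1) ^+ s *+ _]mulr_natr !natz.
  by rewrite mulrBr mulr1 subrK mulrAC.
transitivity (\sum_(s < m.+1 + N.+1) h s).
  apply: sum_ord_widen0 => [|s /andP[ms _]]; first exact: leq_addr.
  by rewrite /h bin_small // mulr0 mul0r.
symmetry; apply: sum_ord_widen0 => [|s /andP[Ns _]]; first exact: leq_addl.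
by rewrite /h (_ : N + 1 - s = 0)%N ?expn0 ?subnn ?mulr0 //; lia.
Qed.

End AlternatingSum.

Local Open Scope ring_scope.

Lemma card_code_ideal_gen (F : finFieldType) (n : nat) (le : rel 'I_n)
    (C : {vspace 'rV[F]_n}) (I : {set 'I_n}) :
  is_poset le -> d1P le C = (n - \dim C + 1)%N -> is_ideal le I ->
  #|[set u in C | ideal_gen le (supp u) == I]|%:Z =
  \sum_(S in powerset (maxl le I))
     (-1) ^+ #|S| * (#|F| ^ (#|I| - (d1P le C).-1 - #|S|))%N%:Z.
Proof.
move=> le_poset C_MDS idI; pose zero_at t (u : 'rV[F]_n) := u ord0 t == 0%R.
have -> : [set u in C | ideal_gen le (supp u) == I] =
          [set u in subcode C I | [forall t in maxl le I, ~~ zero_at t u]].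
  apply/setP => u; rewrite !inE ideal_genE // -andbA; congr (_ && (_ && _)).
  by apply/subsetP/forall_inP => H t /H; rewrite inE.
rewrite -natz inclusion_exclusion; apply: eq_bigr => S; rewrite powersetE => SM.
have -> : [set u in subcode C I | [forall t in S, zero_at t u]] = subcode C (I :\: S).
  by rewrite subcode_setD; apply/setP => u; rewrite !inE.
rewrite (card_subcode le_poset C_MDS) ?ideal_setD_maxl // cardsD.
by rewrite (setIidPr (subset_trans SM (maxl_sub le I))) subnAC natz.
Qed.

Unset Implicit Arguments.
Theorem theorem4 (F : finFieldType) (n : nat) (le : rel 'I_n)
    (C : {vspace 'rV[F]_n}) (r : nat) :
  is_poset le ->
  d1P le C = (n - \dim C + 1)%N ->
  (d1P le C <= r)%N -> (r <= n)%N ->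
  ((APr le C r)%:Z : int) =
    \sum_(I in ideals_of_size le r)
      \sum_(s < (r - d1P le C).+1)
        (-1) ^+ s * ('C(#|maxl le I|, s))%:Z
          * ((#|F| ^ (r - d1P le C + 1 - s) - 1)%N)%:Z.
Proof.
move=> le_poset C_MDS d_le_r r_le_n.
have d_gt0 : (0 < d1P le C)%N by rewrite C_MDS addn1.
rewrite APr_sum_ideals // -[LHS]natz natr_sum; apply: eq_bigr => I.
rewrite inE => /andP[idI /eqP cardI].
rewrite natz card_code_ideal_gen // (sum_powerset_card _ (fun s =>
  (-1) ^+ s * (#|F| ^ (#|I| - (d1P le C).-1 - s))%N%:Z)).
have q_gt0 : (0 < #|F|)%N by apply/card_gt0P; exists 0.
rewrite -sum_alternating_binomial_pow ?card_maxl_gt0 ?cardI //; last lia.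
by rewrite (_ : r - (d1P le C).-1 = (r - d1P le C).+1)%N //; lia.
Qed.
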